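(* Let $\mathbb{D}=\{z\in\mathbb{C}:|z|<1\}$. For $\beta\in(1,\tfrac{11}{8}]$ let $$\mathcal{P}(\beta)=\Big\{f=h+\overline{g}\in\mathcal{H}:\ g'(z)=zh'(z)\ \text{and}\ \operatorname{Re}\Big(1+\frac{zh''(z)}{h'(z)}\Big)<\beta\ \text{for all } z\in\mathbb{D}\Big\}.$$ Then for every $\beta\in(1,\tfrac{11}{8}]$ the class $\mathcal{P}(\beta)$ contains a function that is not univalent in $\mathbb{D}$. More precisely, for each $\gamma\in(1,\tfrac74]$ the harmonic function $f_\gamma=h+\overline{g}$ with $$h(z)=\frac{1}{\gamma}\big[1-(1-z)^{\gamma}\big],\qquad g(z)=\frac{1}{\gamma(1+\gamma)}\big[1-(1+\gamma z)(1-z)^{\gamma}\big]$$ (principal branches) belongs to $\mathcal{P}((1+\gamma)/2)$, hence to $\mathcal{P}(\beta)$ for every $\beta\ge(1+\gamma)/2$, and $f_\gamma$ is not univalent in $\mathbb{D}$.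
   Context: $\mathcal{H}$ denotes the class of complex-valued harmonic functions $f=h+\overline{g}$ on $\mathbb{D}$, with $h,g$ analytic in $\mathbb{D}$, normalized by $f(0)=0$ and $f_z(0)=1$, i.e. $f(z)=z+\sum_{k\ge2}a_kz^k+\overline{\sum_{k\ge1}b_kz^k}$. *)

From Stdlib Require Import Reals.
From Coquelicot Require Import Coquelicot.
Open Scope R_scope.

Definition CC := Complex.C.

Definition inD (z : CC) : Prop := Cmod z < 1.

Definition cderiv (f : CC -> CC) (z l : CC) : Prop :=
  @is_derive C_AbsRing C_NormedModule f z l.

Definition cexp (w : CC) : CC :=
  (exp (Re w) * cos (Im w), exp (Re w) * sin (Im w)).

(* principal argument, in (-PI, PI] *)
Definition carg (w : CC) : R :=
  let x := Re w in let y := Im w in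
  match Rlt_dec 0 x with
  | left _ => atan (y / x)
  | right _ =>
    match Rlt_dec x 0 with
    | left _ => if Rle_dec 0 y then atan (y / x) + PI else atan (y / x) - PI
    | right _ => if Rlt_dec 0 y then PI / 2 else
                 if Rlt_dec y 0 then - (PI / 2) else 0
    end
  end.

Definition clog (w : CC) : CC := (ln (Cmod w), carg w).

(* principal power w^a, a real, w <> 0 (set to 0 at w = 0) *)
Definition cpow (w : CC) (a : R) : CC :=
  if Req_EM_T (Cmod w) 0 then RtoC 0 else cexp (Cmult (RtoC a) (clog w)).

(* f = h + conj g belongs to the class P(beta): h, g analytic in D,
   normalized (h(0)=0, g(0)=0, h'(0)=1), g' = z h', and
   Re (1 + z h''/h') < beta on D (h' nonvanishing so the quotient is defined). *)
Definition in_P (beta : R) (h g : CC -> CC) : Prop :=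
  exists h1 h2 g1 : CC -> CC,
    (forall z, inD z -> cderiv h z (h1 z) /\ cderiv h1 z (h2 z) /\ cderiv g z (g1 z)) /\
    h (RtoC 0) = RtoC 0 /\ g (RtoC 0) = RtoC 0 /\ h1 (RtoC 0) = RtoC 1 /\
    (forall z, inD z -> g1 z = Cmult z (h1 z)) /\
    (forall z, inD z -> h1 z <> RtoC 0 /\
        Re (Cplus (RtoC 1) (Cdiv (Cmult z (h2 z)) (h1 z))) < beta).

Definition harm (h g : CC -> CC) (z : CC) : CC := Cplus (h z) (Cconj (g z)).

Definition univalent_D (f : CC -> CC) : Prop :=
  forall z w, inD z -> inD w -> f z = f w -> z = w.

Definition h_gam (gam : R) (z : CC) : CC :=
  Cdiv (Cminus (RtoC 1) (cpow (Cminus (RtoC 1) z) gam)) (RtoC gam).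
Definition g_gam (gam : R) (z : CC) : CC :=
  Cdiv (Cminus (RtoC 1)
          (Cmult (Cplus (RtoC 1) (Cmult (RtoC gam) z)) (cpow (Cminus (RtoC 1) z) gam)))
       (RtoC (gam * (1 + gam))).

(* Write P_a(z) = (1 - z)^a, analytic on Re z < 1 with P_a' = -a P_(a-1) and
   P_a = (1 - z) P_(a-1).  Then h' = P_(gam-1), h'' = -(gam-1) P_(gam-2) and g' = z h',
   so 1 + z h''/h' = 1 + (1 - gam) z/(1 - z); as Re (z/(1 - z)) > -1/2 on the disk,
   its real part stays below (1 + gam)/2.
   Since h and g commute with conjugation, f(conj z) = f(z) as soon as
   Im h(z) = Im g(z), i.e. as soon as (h - g)(z) = (1 - P_(gam+1)(z))/(1 + gam) is real.
   For 1 - z = cos phi e^(i phi) with phi = pi/(gam + 1) < pi/2, P_(gam+1)(z) has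
   argument pi, while |z| = sin phi < 1 and z is not real: f is not injective.
   The derivatives of exp and log come from the Cauchy-Riemann equations. *)

From Stdlib Require Import Reals Lra.
From Coquelicot Require Import Coquelicot.
Open Scope R_scope.

(** * Real differentiability in two variables *)

Lemma differentiable_pt_lim_eq f x y lx ly lx' ly' :
  differentiable_pt_lim f x y lx ly -> lx = lx' -> ly = ly' ->
  differentiable_pt_lim f x y lx' ly'.
Proof. now intros H -> ->. Qed.

Lemma differentiable_pt_lim_linear (a b x y : R) :
  differentiable_pt_lim (fun u v => a * u + b * v) x y a b.
Proof.
  intros eps. apply locally_2d_forall. intros u v.
  replace (a * u + b * v - (a * x + b * y) - (a * (u - x) + b * (v - y))) with 0 by ring.
  rewrite Rabs_R0. apply Rmult_le_pos; [apply Rlt_le, cond_pos |].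
  eapply Rle_trans; [apply Rabs_pos | apply Rmax_l].
Qed.

Lemma differentiable_pt_lim_snd x y : differentiable_pt_lim (fun _ v => v) x y 0 1.
Proof.
  apply (differentiable_pt_lim_ext (fun u v => 0 * u + 1 * v)).
  - apply locally_2d_forall. intros. ring.
  - apply differentiable_pt_lim_linear.
Qed.

Lemma differentiable_pt_lim_Rplus x y : differentiable_pt_lim Rplus x y 1 1.
Proof.
  apply (differentiable_pt_lim_ext (fun u v => 1 * u + 1 * v)).
  - apply locally_2d_forall. intros. ring.
  - apply differentiable_pt_lim_linear.
Qed.

Lemma differentiable_pt_lim_Rmult x y : differentiable_pt_lim Rmult x y y x.
Proof.
  intros eps. exists eps. intros u v Hu Hv.
  replace (u * v - x * y - (y * (u - x) + x * (v - y))) with ((u - x) * (v - y)) by ring.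
  rewrite Rabs_mult.
  pose proof (Rabs_pos (u - x)). pose proof (Rmax_l (Rabs (u - x)) (Rabs (v - y))).
  nra.
Qed.

Lemma differentiable_pt_lim_plus f g x y fx fy gx gy :
  differentiable_pt_lim f x y fx fy -> differentiable_pt_lim g x y gx gy ->
  differentiable_pt_lim (fun u v => f u v + g u v) x y (fx + gx) (fy + gy).
Proof.
  intros Hf Hg. eapply differentiable_pt_lim_eq.
  - apply (differentiable_pt_lim_comp Rplus f g);
      [apply differentiable_pt_lim_Rplus | exact Hf | exact Hg].
  - ring.
  - ring.
Qed.

Lemma differentiable_pt_lim_mult f g x y fx fy gx gy :
  differentiable_pt_lim f x y fx fy -> differentiable_pt_lim g x y gx gy ->
  differentiable_pt_lim (fun u v => f u v * g u v) x y
    (fx * g x y + f x y * gx) (fy * g x y + f x y * gy).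
Proof.
  intros Hf Hg. eapply differentiable_pt_lim_eq.
  - apply (differentiable_pt_lim_comp Rmult f g);
      [apply differentiable_pt_lim_Rmult | exact Hf | exact Hg].
  - ring.
  - ring.
Qed.

Lemma differentiable_pt_lim_comp_R (phi : R -> R) dphi f x y fx fy :
  derivable_pt_lim phi (f x y) dphi -> differentiable_pt_lim f x y fx fy ->
  differentiable_pt_lim (fun u v => phi (f u v)) x y (dphi * fx) (dphi * fy).
Proof.
  intros Hphi Hf. eapply differentiable_pt_lim_eq.
  - apply (differentiable_pt_lim_comp (fun a _ => phi a) f f);
      [apply differentiable_pt_lim_proj1_0, Hphi | exact Hf | exact Hf].
  - ring.
  - ring.
Qed.

Lemma differentiable_pt_lim_proj2_0 (phi : R -> R) x y dphi :
  derivable_pt_lim phi y dphi -> differentiable_pt_lim (fun _ v => phi v) x y 0 dphi.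
Proof.
  intros Hphi. eapply differentiable_pt_lim_eq;
    [apply (differentiable_pt_lim_comp_R phi dphi (fun _ v => v));
      [exact Hphi | apply differentiable_pt_lim_snd] | ring | ring].
Qed.

Lemma differentiable_pt_lim_norm2 x y :
  differentiable_pt_lim (fun u v => u ^ 2 + v ^ 2) x y (2 * x) (2 * y).
Proof.
  eapply differentiable_pt_lim_eq.
  - apply differentiable_pt_lim_plus.
    + apply (differentiable_pt_lim_proj1_0 (fun t => t ^ 2)), derivable_pt_lim_pow.
    + apply (differentiable_pt_lim_proj2_0 (fun t => t ^ 2)), derivable_pt_lim_pow.
  - simpl; ring.
  - simpl; ring.
Qed.

Lemma derivable_pt_lim_Rinv x : x <> 0 -> derivable_pt_lim Rinv x (- / x ^ 2).
Proof.
  intros Hx. apply is_derive_Reals.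
  replace (- / x ^ 2) with (- (1) / x ^ 2) by (field; auto).
  apply (is_derive_inv (fun t => t)); [apply (@is_derive_id R_AbsRing) | exact Hx].
Qed.

(** * Complex derivatives *)

Lemma Cmod_le_Rabs_sum (a b : R) : Cmod (a, b) <= Rabs a + Rabs b.
Proof.
  unfold Cmod; simpl.
  pose proof (Rabs_pos a); pose proof (Rabs_pos b).
  rewrite <- (sqrt_Rsqr (Rabs a + Rabs b)) by lra.
  apply sqrt_le_1_alt. unfold Rsqr.
  pose proof (Rsqr_abs a); pose proof (Rsqr_abs b). unfold Rsqr in *. nra.
Qed.

Lemma cderiv_intro (f : CC -> CC) z l :
  (forall eps : posreal, exists delta : posreal, forall w,
     Cmod (w - z) < delta -> Cmod (f w - f z - (w - z) * l) <= eps * Cmod (w - z))%C ->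
  cderiv f z l.
Proof.
  intros H. split.
  - apply is_linear_scal_l.
  - intros x Hx.
    apply (@is_filter_lim_locally_unique C_AbsRing (AbsRing_NormedModule C_AbsRing)) in Hx.
    subst x. intros eps. destruct (H eps) as [d Hd]. exists d. exact Hd.
Qed.

Lemma cderiv_Cauchy_Riemann (F : CC -> CC) (u v : R -> R -> R) x y ux uy :
  (forall a b, F (a, b) = (u a b, v a b)) ->
  differentiable_pt_lim u x y ux uy -> differentiable_pt_lim v x y (- uy) ux ->
  cderiv F (x, y) (ux, - uy).
Proof.
  intros HF Hu Hv. apply cderiv_intro. intros eps.
  destruct (Hu (pos_div_2 eps)) as [d1 H1].
  destruct (Hv (pos_div_2 eps)) as [d2 H2].
  assert (Hd : 0 < Rmin d1 d2) by (apply Rmin_pos; apply cond_pos).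
  exists (mkposreal _ Hd). intros [a b] Hw. simpl in Hw.
  pose proof (Rmax_Cmod ((a, b) - (x, y))%C) as Hmax. simpl in Hmax.
  pose proof (Rmin_l d1 d2). pose proof (Rmin_r d1 d2).
  pose proof (Rmax_l (Rabs (a + - x)) (Rabs (b + - y))).
  pose proof (Rmax_r (Rabs (a + - x)) (Rabs (b + - y))).
  specialize (H1 a b ltac:(unfold Rminus; lra) ltac:(unfold Rminus; lra)).
  specialize (H2 a b ltac:(unfold Rminus; lra) ltac:(unfold Rminus; lra)).
  simpl in H1, H2. rewrite !HF.
  match goal with |- Cmod ?X <= _ => replace X with
    (u a b - u x y - (ux * (a - x) + uy * (b - y)),
     v a b - v x y - (- uy * (a - x) + ux * (b - y))) end.
  2: { unfold Cminus, Cplus, Copp, Cmult; simpl. f_equal; ring. }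
  eapply Rle_trans; [apply Cmod_le_Rabs_sum |].
  unfold Rminus in H1, H2 |- *. pose proof (cond_pos eps). nra.
Qed.

Lemma cderiv_of_is_derive (f : CC -> CC) z l :
  @is_derive C_AbsRing (AbsRing_NormedModule C_AbsRing) f z l -> cderiv f z l.
Proof. intros [[] Hf]. now repeat split. Qed.

Lemma is_derive_of_cderiv (f : CC -> CC) z l :
  cderiv f z l -> @is_derive C_AbsRing (AbsRing_NormedModule C_AbsRing) f z l.
Proof. intros [[] Hf]. now repeat split. Qed.

Lemma cderiv_eq f z l l' : cderiv f z l -> l = l' -> cderiv f z l'.
Proof. now intros H ->. Qed.

Lemma cderiv_ext_loc (f g : CC -> CC) (z : C_AbsRing) l :
  locally z (fun t => f t = g t) -> cderiv f z l -> cderiv g z l.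
Proof. apply is_derive_ext_loc. Qed.

Lemma cderiv_const (c : CC) z : cderiv (fun _ => c) z (RtoC 0).
Proof. apply (@is_derive_const C_AbsRing C_NormedModule). Qed.

Lemma cderiv_id z : cderiv (fun t => t) z (RtoC 1).
Proof. apply cderiv_of_is_derive, (@is_derive_id C_AbsRing). Qed.

Lemma cderiv_plus f g z df dg : cderiv f z df -> cderiv g z dg ->
  cderiv (fun t => f t + g t)%C z (df + dg)%C.
Proof. exact (is_derive_plus f g z df dg). Qed.

Lemma cderiv_minus f g z df dg : cderiv f z df -> cderiv g z dg ->
  cderiv (fun t => f t - g t)%C z (df - dg)%C.
Proof. exact (is_derive_minus f g z df dg). Qed.

Lemma cderiv_mult f g z df dg : cderiv f z df -> cderiv g z dg ->
  cderiv (fun t => f t * g t)%C z (df * g z + f z * dg)%C.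
Proof.
  intros Hf Hg. apply cderiv_of_is_derive.
  apply (is_derive_mult f g z df dg (is_derive_of_cderiv _ _ _ Hf) (is_derive_of_cderiv _ _ _ Hg)).
  exact Cmult_comm.
Qed.

Lemma cderiv_comp f g z df dg : cderiv f (g z) df -> cderiv g z dg ->
  cderiv (fun t => f (g t)) z (dg * df)%C.
Proof. intros Hf Hg. exact (is_derive_comp f g z df dg Hf (is_derive_of_cderiv _ _ _ Hg)). Qed.

Lemma locally_Re_near (z : C_AbsRing) (eps : posreal) :
  locally z (fun p : C_AbsRing => Rabs (Re p - Re z) < eps).
Proof.
  exists eps. intros p Hp.
  eapply Rle_lt_trans; [| exact Hp].
  change (Rabs (Re p - Re z) <= Cmod (p - z)%C).
  replace (Re p - Re z) with (Re (p - z)%C) by (destruct p, z; simpl; ring).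
  apply re_le_Cmod.
Qed.

(* [CC] is only an alias of [C]; [ring] and [field] need to see the latter. *)
Ltac Cring := cbv beta; lazymatch goal with |- @eq _ ?a ?b => change (@eq C a b) end; ring.
Ltac Cfield := cbv beta; lazymatch goal with |- @eq _ ?a ?b => change (@eq C a b) end; field.

Lemma Cconj_RtoC r : Cconj (RtoC r) = RtoC r.
Proof. unfold Cconj, RtoC; simpl. f_equal. ring. Qed.

Lemma RtoC_neq0 r : r <> 0 -> RtoC r <> RtoC 0.
Proof. intros Hr E. now apply Hr, RtoC_inj. Qed.

Lemma locally_Re_lt (z : C_AbsRing) c : Re z < c -> locally z (fun p : C_AbsRing => Re p < c).
Proof.
  intros H. assert (Hd : 0 < c - Re z) by lra.
  eapply filter_imp; [| exact (locally_Re_near z (mkposreal _ Hd))].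
  intros p Hp. simpl in Hp. apply Rabs_def2 in Hp. lra.
Qed.

(** * The exponential and the principal logarithm *)

Lemma cexp_plus a b : cexp (a + b)%C = (cexp a * cexp b)%C.
Proof.
  destruct a as [x y], b as [u v]. unfold cexp, Cmult; simpl.
  rewrite exp_plus, cos_plus, sin_plus. f_equal; ring.
Qed.

Lemma cexp_neq0 w : cexp w <> RtoC 0.
Proof.
  unfold cexp. intros H. injection H. intros Hs Hc.
  pose proof (exp_pos (Re w)). pose proof (sin2_cos2 (Im w)). unfold Rsqr in *.
  apply Rmult_integral in Hs as [Hs | Hs]; [lra |].
  apply Rmult_integral in Hc as [Hc | Hc]; [lra |].
  rewrite Hs, Hc in *. lra.
Qed.

Lemma cexp_conj w : cexp (Cconj w) = Cconj (cexp w).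
Proof.
  destruct w as [x y]. unfold cexp, Cconj; simpl.
  rewrite cos_neg, sin_neg. f_equal; ring.
Qed.

Lemma clog_of_Re_pos w : 0 < Re w -> clog w = (ln (Cmod w), atan (Im w / Re w)).
Proof. intros H. unfold clog, carg. destruct (Rlt_dec 0 (Re w)); [reflexivity | lra]. Qed.

Lemma cexp_clog w : 0 < Re w -> cexp (clog w) = w.
Proof.
  intros H. rewrite clog_of_Re_pos by exact H.
  destruct w as [x y]. simpl in H.
  set (S := sqrt (1 + (y / x)²)).
  assert (HS : 0 < S) by (apply sqrt_lt_R0; pose proof (Rle_0_sqr (y / x)); lra).
  assert (Hmod : Cmod (x, y) = x * S).
  { unfold Cmod, S. cbn [fst snd]. rewrite <- (sqrt_pow2 x) at 2 by lra.
    rewrite <- sqrt_mult_alt by nra. f_equal. unfold Rsqr. field. lra. }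
  rewrite Hmod. unfold cexp. cbn [fst snd Re Im]. rewrite exp_ln by nra.
  rewrite cos_atan, sin_atan. fold S. f_equal; field; lra.
Qed.

Lemma clog_conj w : 0 < Re w -> clog (Cconj w) = Cconj (clog w).
Proof.
  intros H. rewrite !clog_of_Re_pos by (rewrite ?re_conj; exact H).
  rewrite Cmod_conj, re_conj, im_conj. unfold Cconj; simpl.
  rewrite Rdiv_opp_l, atan_opp. reflexivity.
Qed.

Lemma Cmod_polar r phi : 0 <= r -> Cmod (r * cos phi, r * sin phi) = r.
Proof.
  intros Hr. pose proof (sin2_cos2 phi) as E. unfold Rsqr in E.
  unfold Cmod; cbn [fst snd].
  replace ((r * cos phi) ^ 2 + (r * sin phi) ^ 2) with (r ^ 2)
    by (rewrite <- (Rmult_1_r (r ^ 2)), <- E; ring).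
  now apply sqrt_pow2.
Qed.

Lemma carg_polar r phi : 0 < r -> - (PI / 2) < phi < PI / 2 ->
  carg (r * cos phi, r * sin phi) = phi.
Proof.
  intros Hr Hphi. assert (Hc : 0 < cos phi) by (apply cos_gt_0; lra).
  unfold carg; simpl. destruct (Rlt_dec 0 (r * cos phi)) as [_ | Hn]; [| nra].
  replace (r * sin phi / (r * cos phi)) with (tan phi) by (unfold tan; field; lra).
  now apply atan_tan.
Qed.

Lemma cderiv_cexp z : cderiv cexp z (cexp z).
Proof.
  destruct z as [x y].
  pose proof (differentiable_pt_lim_proj1_0 exp x y _ (derivable_pt_lim_exp x)) as Hexp.
  pose proof (differentiable_pt_lim_proj2_0 cos x y _ (derivable_pt_lim_cos y)) as Hcos.
  pose proof (differentiable_pt_lim_proj2_0 sin x y _ (derivable_pt_lim_sin y)) as Hsin.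
  eapply cderiv_eq.
  - apply (cderiv_Cauchy_Riemann cexp (fun a b => exp a * cos b) (fun a b => exp a * sin b)
      x y (exp x * cos y) (- (exp x * sin y))); [reflexivity | |].
    + eapply differentiable_pt_lim_eq; [apply differentiable_pt_lim_mult; eassumption | cbv beta; ring ..].
    + eapply differentiable_pt_lim_eq; [apply differentiable_pt_lim_mult; eassumption | cbv beta; ring ..].
  - unfold cexp; simpl. f_equal. ring.
Qed.

Lemma cderiv_clog w : 0 < Re w -> cderiv clog w (Cinv w).
Proof.
  intros Hw. destruct w as [x y]. simpl in Hw.
  set (D := x ^ 2 + y ^ 2).
  assert (HD : 0 < D) by (unfold D; nra).
  assert (HsD : 0 < sqrt D) by (apply sqrt_lt_R0, HD).
  assert (Hs2 : sqrt D * sqrt D = D) by (apply sqrt_sqrt; lra).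
  apply (cderiv_ext_loc (fun p => (ln (sqrt (fst p ^ 2 + snd p ^ 2)), atan (snd p * / fst p)))).
  { eapply filter_imp; [| exact (locally_Re_near ((x, y) : C_AbsRing) (mkposreal x Hw))].
    intros p Hp. simpl in Hp. apply Rabs_def2 in Hp.
    rewrite clog_of_Re_pos by lra. reflexivity. }
  eapply cderiv_eq.
  - apply (cderiv_Cauchy_Riemann _ (fun a b => ln (sqrt (a ^ 2 + b ^ 2))) (fun a b => atan (b * / a))
      x y (x / D) (y / D)); [reflexivity | |].
    + eapply differentiable_pt_lim_eq.
      * apply (differentiable_pt_lim_comp_R ln (/ sqrt D)); [apply derivable_pt_lim_ln, HsD |].
        apply (differentiable_pt_lim_comp_R sqrt (/ (2 * sqrt D))); [apply derivable_pt_lim_sqrt, HD |].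
        apply differentiable_pt_lim_norm2.
      * rewrite <- Hs2 at 3. field. lra.
      * rewrite <- Hs2 at 3. field. lra.
    + eapply differentiable_pt_lim_eq.
      * apply (differentiable_pt_lim_comp_R atan (/ (1 + (y * / x) ^ 2)));
          [apply derivable_pt_lim_atan |].
        apply differentiable_pt_lim_mult; [apply differentiable_pt_lim_snd |].
        apply differentiable_pt_lim_proj1_0, derivable_pt_lim_Rinv. lra.
      * unfold D. field. split; [nra | lra].
      * unfold D. field. split; [nra | lra].
  - unfold Cinv; simpl. unfold D. f_equal; field; nra.
Qed.

(** * The power (1 - z)^a *)

Definition pow_one_minus (a : R) (z : CC) : CC := cexp (RtoC a * clog (RtoC 1 - z))%C.

Lemma Re_one_minus_pos z : Re z < 1 -> 0 < Re (RtoC 1 - z)%C.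
Proof. destruct z as [x y]. simpl. lra. Qed.

Lemma one_minus_neq0 z : Re z < 1 -> (RtoC 1 - z)%C <> RtoC 0.
Proof.
  intros Hz E. pose proof (Re_one_minus_pos z Hz) as H. rewrite E in H. simpl in H. lra.
Qed.

Lemma cpow_one_minus a z : Re z < 1 -> cpow (RtoC 1 - z)%C a = pow_one_minus a z.
Proof.
  intros Hz. unfold cpow. destruct (Req_EM_T _ _) as [E | _]; [| reflexivity].
  apply Cmod_eq_0 in E. now apply one_minus_neq0 in E.
Qed.

Lemma pow_one_minus_0 a : pow_one_minus a (RtoC 0) = RtoC 1.
Proof.
  unfold pow_one_minus.
  replace (RtoC 1 - RtoC 0)%C with (RtoC 1) by Cring.
  rewrite clog_of_Re_pos by (simpl; lra). rewrite Cmod_1, ln_1.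
  unfold cexp, Cmult, RtoC; simpl.
  replace (0 / 1) with 0 by field. rewrite atan_0.
  replace (a * 0 - 0 * 0) with 0 by ring. replace (a * 0 + 0 * 0) with 0 by ring.
  rewrite exp_0, cos_0, sin_0. f_equal; ring.
Qed.

Lemma pow_one_minus_pred a z : Re z < 1 ->
  (pow_one_minus a z = (RtoC 1 - z) * pow_one_minus (a - 1) z)%C.
Proof.
  intros Hz. unfold pow_one_minus.
  rewrite <- (cexp_clog (RtoC 1 - z)%C) at 2 by now apply Re_one_minus_pos.
  rewrite <- cexp_plus. f_equal. rewrite RtoC_minus. Cring.
Qed.

Lemma cderiv_pow_one_minus a z : Re z < 1 ->
  cderiv (pow_one_minus a) z (- RtoC a * pow_one_minus (a - 1) z)%C.
Proof.
  intros Hz. pose proof (one_minus_neq0 z Hz) as Hn. unfold pow_one_minus at 1.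
  eapply cderiv_eq.
  - apply (cderiv_comp cexp (fun t => RtoC a * clog (RtoC 1 - t))%C); [apply cderiv_cexp |].
    apply cderiv_mult; [apply cderiv_const |].
    apply (cderiv_comp clog (fun t => RtoC 1 - t)%C);
      [apply cderiv_clog, Re_one_minus_pos, Hz |].
    apply cderiv_minus; [apply cderiv_const | apply cderiv_id].
  - fold (pow_one_minus a z). rewrite (pow_one_minus_pred a z Hz). Cfield. exact Hn.
Qed.

Lemma pow_one_minus_conj a z : Re z < 1 ->
  pow_one_minus a (Cconj z) = Cconj (pow_one_minus a z).
Proof.
  intros Hz. unfold pow_one_minus.
  replace (RtoC 1 - Cconj z)%C with (Cconj (RtoC 1 - z))
    by (rewrite Cminus_conj, Cconj_RtoC; reflexivity).
  rewrite clog_conj by now apply Re_one_minus_pos.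
  now rewrite <- cexp_conj, Cmult_conj, Cconj_RtoC.
Qed.

Lemma Im_pow_one_minus_polar a z r phi :
  0 < r -> - (PI / 2) < phi < PI / 2 -> (RtoC 1 - z)%C = (r * cos phi, r * sin phi) ->
  Im (pow_one_minus a z) = exp (a * ln r) * sin (a * phi).
Proof.
  intros Hr Hphi Hz. unfold pow_one_minus, clog. rewrite Hz, Cmod_polar, carg_polar by lra.
  unfold cexp; simpl. f_equal; f_equal; ring.
Qed.

(** * The class P(beta) *)

Lemma inD_iff z : inD z <-> Re z ^ 2 + Im z ^ 2 < 1.
Proof.
  unfold inD, Cmod. rewrite <- sqrt_1 at 1. split; intros H.
  - now apply sqrt_lt_0_alt.
  - apply sqrt_lt_1_alt. split; [nra | exact H].
Qed.

Lemma inD_Re_lt_1 z : inD z -> Re z < 1.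
Proof. rewrite inD_iff. nra. Qed.

Lemma Re_div_one_minus_gt z : inD z -> - (1 / 2) < Re (z / (RtoC 1 - z))%C.
Proof.
  rewrite inD_iff. destruct z as [x y]. cbn [Re Im fst snd]. intros Hz.
  set (D := (1 - x) ^ 2 + y ^ 2).
  assert (HD : 0 < D) by (unfold D; nra).
  replace (Re _) with (- (1 / 2) + (1 - x ^ 2 - y ^ 2) / (2 * D))
    by (unfold Cdiv, Cinv, Cmult, Cminus, Cplus, Copp, D; simpl; field; nra).
  assert (0 < (1 - x ^ 2 - y ^ 2) / (2 * D)) by (apply Rdiv_lt_0_compat; lra).
  lra.
Qed.

Lemma h_gam_eq gam z : Re z < 1 ->
  h_gam gam z = ((RtoC 1 - pow_one_minus gam z) / RtoC gam)%C.
Proof. intros Hz. unfold h_gam. now rewrite cpow_one_minus. Qed.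

Lemma g_gam_eq gam z : Re z < 1 ->
  g_gam gam z = ((RtoC 1 - (RtoC 1 + RtoC gam * z) * pow_one_minus gam z)
                 / RtoC (gam * (1 + gam)))%C.
Proof. intros Hz. unfold g_gam. now rewrite cpow_one_minus. Qed.

Lemma cderiv_h_gam gam z : 0 < gam -> Re z < 1 ->
  cderiv (h_gam gam) z (pow_one_minus (gam - 1) z).
Proof.
  intros Hg Hz. pose proof (RtoC_neq0 gam ltac:(lra)).
  apply (cderiv_ext_loc (fun t => (RtoC 1 - pow_one_minus gam t) / RtoC gam)%C).
  { eapply filter_imp; [| exact (locally_Re_lt z 1 Hz)].
    intros t Ht. symmetry. now apply h_gam_eq. }
  eapply cderiv_eq.
  - apply cderiv_mult; [| apply cderiv_const].
    apply cderiv_minus; [apply cderiv_const | apply cderiv_pow_one_minus, Hz].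
  - Cfield. auto.
Qed.

Lemma cderiv_g_gam gam z : 0 < gam -> Re z < 1 ->
  cderiv (g_gam gam) z (z * pow_one_minus (gam - 1) z)%C.
Proof.
  intros Hg Hz. pose proof (RtoC_neq0 gam ltac:(lra)). pose proof (RtoC_neq0 (1 + gam) ltac:(lra)).
  apply (cderiv_ext_loc (fun t => (RtoC 1 - (RtoC 1 + RtoC gam * t) * pow_one_minus gam t)
                                  / RtoC (gam * (1 + gam)))%C).
  { eapply filter_imp; [| exact (locally_Re_lt z 1 Hz)].
    intros t Ht. symmetry. now apply g_gam_eq. }
  eapply cderiv_eq.
  - apply cderiv_mult; [| apply cderiv_const].
    apply cderiv_minus; [apply cderiv_const |].
    apply cderiv_mult; [| apply cderiv_pow_one_minus, Hz].
    apply cderiv_plus; [apply cderiv_const |].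
    apply cderiv_mult; [apply cderiv_const | apply cderiv_id].
  - rewrite (pow_one_minus_pred gam z Hz), RtoC_mult, RtoC_plus in *.
    Cfield. auto.
Qed.

Lemma in_P_h_g_gam gam beta : 1 < gam -> (1 + gam) / 2 <= beta ->
  in_P beta (h_gam gam) (g_gam gam).
Proof.
  intros Hg Hb. pose proof (RtoC_neq0 gam ltac:(lra)). pose proof (RtoC_neq0 (1 + gam) ltac:(lra)).
  assert (Hre0 : Re (RtoC 0) < 1) by (simpl; lra).
  exists (pow_one_minus (gam - 1)), (fun z => - RtoC (gam - 1) * pow_one_minus (gam - 1 - 1) z)%C,
    (fun z => z * pow_one_minus (gam - 1) z)%C.
  split; [| split; [| split; [| split; [| split]]]].
  - intros z Hz. pose proof (inD_Re_lt_1 z Hz). split; [| split].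
    + apply cderiv_h_gam; lra.
    + now apply cderiv_pow_one_minus.
    + apply cderiv_g_gam; lra.
  - rewrite h_gam_eq, pow_one_minus_0 by exact Hre0. Cfield. auto.
  - rewrite g_gam_eq, pow_one_minus_0, RtoC_mult, RtoC_plus in * by exact Hre0. Cfield. split; auto.
  - apply pow_one_minus_0.
  - reflexivity.
  - intros z Hz. split; [apply cexp_neq0 |].
    pose proof (Re_div_one_minus_gt z Hz) as Hre.
    pose proof (one_minus_neq0 z (inD_Re_lt_1 z Hz)).
    pose proof (cexp_neq0 (RtoC (gam - 1 - 1) * clog (RtoC 1 - z))%C).
    rewrite (pow_one_minus_pred (gam - 1) z (inD_Re_lt_1 z Hz)).
    replace (RtoC 1 + _ / _)%C with (RtoC 1 + RtoC (1 - gam) * (z / (RtoC 1 - z)))%C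
      by (rewrite !RtoC_minus; Cfield; auto).
    destruct (z / (RtoC 1 - z))%C as [u v]. simpl in Hre |- *. nra.
Qed.

(** * Non-univalence *)

Lemma not_univalent_of_conj (f : CC -> CC) z :
  inD z -> Im z <> 0 -> f (Cconj z) = f z -> ~ univalent_D f.
Proof.
  intros Hz Him Hf Hu.
  assert (Hzc : inD (Cconj z)) by (unfold inD; now rewrite Cmod_conj).
  pose proof (f_equal Im (Hu _ _ Hzc Hz Hf)) as E. rewrite im_conj in E. lra.
Qed.

Lemma harm_conj_eq h g z :
  h (Cconj z) = Cconj (h z) -> g (Cconj z) = Cconj (g z) -> Im (h z) = Im (g z) ->
  harm h g (Cconj z) = harm h g z.
Proof.
  intros Hh Hg Him. unfold harm. rewrite Hh, Hg, Cconj_conj.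
  destruct (h z) as [a b], (g z) as [c d]. simpl in Him.
  unfold Cconj, Cplus; simpl. f_equal; lra.
Qed.

Lemma h_gam_conj gam z : 0 < gam -> Re z < 1 ->
  h_gam gam (Cconj z) = Cconj (h_gam gam z).
Proof.
  intros Hg Hz. assert (Hzc : Re (Cconj z) < 1) by now rewrite re_conj.
  rewrite !h_gam_eq, pow_one_minus_conj by assumption.
  rewrite Cdiv_conj, Cminus_conj, !Cconj_RtoC; [reflexivity | apply RtoC_neq0; lra].
Qed.

Lemma g_gam_conj gam z : 0 < gam -> Re z < 1 ->
  g_gam gam (Cconj z) = Cconj (g_gam gam z).
Proof.
  intros Hg Hz. assert (Hzc : Re (Cconj z) < 1) by now rewrite re_conj.
  rewrite !g_gam_eq, pow_one_minus_conj by assumption.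
  rewrite Cdiv_conj, Cminus_conj, Cmult_conj, Cplus_conj, Cmult_conj, !Cconj_RtoC;
    [reflexivity | apply RtoC_neq0; nra].
Qed.

Lemma h_gam_sub_g_gam gam z : 0 < gam -> Re z < 1 ->
  (h_gam gam z - g_gam gam z = (RtoC 1 - pow_one_minus (gam + 1) z) / RtoC (1 + gam))%C.
Proof.
  intros Hg Hz. pose proof (RtoC_neq0 gam ltac:(lra)). pose proof (RtoC_neq0 (1 + gam) ltac:(lra)).
  rewrite h_gam_eq, g_gam_eq, (pow_one_minus_pred (gam + 1)) by exact Hz.
  replace (gam + 1 - 1) with gam by ring.
  rewrite RtoC_mult, RtoC_plus in *. Cfield. split; auto.
Qed.

Lemma Im_h_gam_eq_Im_g_gam gam z : 0 < gam -> Re z < 1 ->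
  Im (pow_one_minus (gam + 1) z) = 0 -> Im (h_gam gam z) = Im (g_gam gam z).
Proof.
  intros Hg Hz Him. pose proof (f_equal Im (h_gam_sub_g_gam gam z Hg Hz)) as E.
  destruct (h_gam gam z) as [a b], (g_gam gam z) as [c d], (pow_one_minus (gam + 1) z) as [p q].
  unfold Cdiv, Cinv, Cmult, Cminus, Cplus, Copp in E. simpl in Him, E |- *. subst q.
  replace (_ * _ + _ * _) with 0 in E by (field; lra). lra.
Qed.

Lemma not_univalent_harm_gam gam : 1 < gam -> ~ univalent_D (harm (h_gam gam) (g_gam gam)).
Proof.
  intros Hg. pose proof PI_RGT_0.
  set (phi := PI / (gam + 1)).
  assert (Hphi : 0 < phi < PI / 2).
  { unfold phi. split; [apply Rdiv_lt_0_compat; lra |].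
    apply Rmult_lt_reg_r with (gam + 1); [lra |]. field_simplify; nra. }
  set (c := cos phi). set (s := sin phi).
  assert (Hc : 0 < c) by (apply cos_gt_0; lra).
  assert (Hs : 0 < s) by (apply sin_gt_0; lra).
  assert (Hcs : s * s + c * c = 1) by (apply sin2_cos2).
  set (z := Cminus (RtoC 1) (c * c, c * s)).
  assert (Hz : Re z < 1) by (simpl; nra).
  apply (not_univalent_of_conj _ z).
  - rewrite inD_iff. simpl. nra.
  - simpl. nra.
  - apply harm_conj_eq; [apply h_gam_conj | apply g_gam_conj | apply Im_h_gam_eq_Im_g_gam]; try lra.
    rewrite (Im_pow_one_minus_polar (gam + 1) z c phi); [| lra | lra | unfold z; fold c s; Cring].
    replace ((gam + 1) * phi) with PI by (unfold phi; field; lra).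
    rewrite sin_PI. ring.
Qed.

Theorem mainTheorem1 :
  (forall beta : R, 1 < beta <= 11 / 8 ->
     exists h g : CC -> CC, in_P beta h g /\ ~ univalent_D (harm h g)) /\
  (forall gam : R, 1 < gam <= 7 / 4 ->
     in_P ((1 + gam) / 2) (h_gam gam) (g_gam gam) /\
     (forall beta : R, (1 + gam) / 2 <= beta -> in_P beta (h_gam gam) (g_gam gam)) /\
     ~ univalent_D (harm (h_gam gam) (g_gam gam))).
Proof.
  split.
  - intros beta Hb. exists (h_gam (2 * beta - 1)), (g_gam (2 * beta - 1)). split.
    + apply in_P_h_g_gam; lra.
    + apply not_univalent_harm_gam; lra.
  - intros gam Hg. split; [| split].
    + apply in_P_h_g_gam; lra.
    + intros beta Hb. apply in_P_h_g_gam; lra.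
    + apply not_univalent_harm_gam; lra.
Qed.
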